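(* Let $\hat W^{\rm opt,narrow}$ be the optimal value of (P1) when all pairs are restricted to lie in $\mathcal M^{\rm narrow}$, and let $\hat W^{\rm narrow}$ be the value of the output of Algorithm IIa. Then $\hat W^{\rm narrow}\ge \hat W^{\rm opt,narrow}/(1+T+\Delta+2J)$.
   Context: Setup. Fix integers $K\ge1$, $N\ge1$, $T\ge1$, $J\ge0$, $\Delta\ge0$. Let $\{\mathcal G_1,\dots,\mathcal G_L\}$ be a partition of $\{1,\dots,K\}$. A chunk is a vector $c\in\{0,1\}^N$ whose ones form a nonempty contiguous block; ${\rm Tail}(c)$ is the largest index $i$ with $c(i)=1$; $i\in c$ means $c(i)=1$; chunks intersect if they share an index. Let $\mathcal U$ be the family of nonempty $U\subseteq\{1,\dots,K\}$ with $|U|\le T$ and $|U\cap\mathcal G_s|\le1$ for all $s$; pairs are elements of $\mathcal M=\mathcal U\times\mathcal C$. Given metrics $p(U,c)\ge0$, weights $\beta^q(U,c)\in[0,1]$ ($q=1,\dots,J$), and binary weights $\alpha^q(U,c)\in\{0,1\}$ ($q$ in a finite set $\mathcal I$) with $\sum_{q\in\mathcal I}\alpha^q(U,c)\le\Delta$ for every pair. A set $F$ of pairs is feasible if: each group meets $U$ for at most one $(U,c)\in F$; each index $i$ lies in $c$ for at most one $(U,c)\in F$; $\sum_F\beta^q\le1$ for all $q\le J$; $\sum_F\alpha^q\le1$ for all $q\in\mathcal I$. Problem (P1) maximizes $\sum_F p$ over feasible $F$. Pairs $(U,c),(U',c')$ conflict if some group meets both $U$ and $U'$, or $c,c'$ intersect,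 or some $q\in\mathcal I$ has $\alpha^q(U,c)=\alpha^q(U',c')=1$. $\mathcal M^{\rm narrow}=\{(U,c):\beta^q(U,c)\le1/2\ \forall q\le J\}$; $\max_{q\le J}\beta^q:=0$ if $J=0$. Algorithm IIa: set $p'=p$ on $\mathcal M^{\rm narrow}$ and an empty stack $S$. For $j=1,\dots,N$: let $(U^*,c^* )$ maximize $p'$ over pairs of $\mathcal M^{\rm narrow}$ with ${\rm Tail}(c)=j$; if $p'(U^*,c^* )>0$, set $\hat p=p'(U^*,c^* )$, push $(U^*,c^* )$ on $S$, and for every $(U,c)\in\mathcal M^{\rm narrow}$ with $p'(U,c)>0$ subtract $\hat p$ from $p'(U,c)$ if $(U,c)$ conflicts with $(U^*,c^* )$, and subtract $2\hat p\max_{q\le J}\beta^q(U,c)$ otherwise. Then, starting with $S'=\emptyset$, repeatedly pop the top of $S$ and add it to $S'$ if $S'$ together with it is feasible. Output $S'$ with value $\hat W^{\rm narrow}=\sum_{(U,c)\in S'}p(U,c)$. *)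

From HB Require Import structures.
From mathcomp Require Import all_boot all_order all_algebra.
Import Order.TTheory GRing.Theory Num.Theory.
Local Open Scope ring_scope.

(* Conventions:
   - users are 'I_K, indices are 'I_N (0-based);
   - the partition {G_1..G_L} is given by the group map g : 'I_K -> 'I_L;
   - a chunk is encoded by its endpoints (a,b) with a <= b: it is the block a..b,
     Tail = b;
   - the finite index set of the alpha constraints is a finType I. *)

Section Setup.
Variables (R : realFieldType) (K N L T J Delta : nat) (g : 'I_K -> 'I_L) (I : finType).

Definition pairT := ({set 'I_K} * ('I_N * 'I_N))%type.

Variables (p : pairT -> R) (beta : 'I_J -> pairT -> R) (alpha : I -> pairT -> bool).

Definition Uadm (U : {set 'I_K}) : bool :=
  [&& U != set0, (#|U| <= T)%N & [forall s : 'I_L, (#|[set k in U | g k == s]| <= 1)%N]].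

Definition is_chunk (c : 'I_N * 'I_N) : bool := (c.1 <= c.2)%N.
Definition inchunk (c : 'I_N * 'I_N) (i : 'I_N) : bool := (c.1 <= i)%N && (i <= c.2)%N.
Definition Tail (c : 'I_N * 'I_N) : nat := c.2.

Definition inM (x : pairT) : bool := Uadm x.1 && is_chunk x.2.

Definition narrow (x : pairT) : bool := inM x && [forall q : 'I_J, beta q x <= 1 / 2].

Definition feasible (F : {set pairT}) : bool :=
  [&& [forall s : 'I_L, (#|[set x in F | [exists k in x.1, g k == s]]| <= 1)%N],
      [forall i : 'I_N, (#|[set x in F | inchunk x.2 i]| <= 1)%N],
      [forall q : 'I_J, \sum_(x in F) beta q x <= 1] &
      [forall q : I, (\sum_(x in F) (alpha q x : nat) <= 1)%N]].

Definition Wopt_narrow : R :=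
  \big[Num.max/0]_(F : {set pairT} | (F \subset [pred x | narrow x]) && feasible F)
     \sum_(x in F) p x.

Definition conflict (x y : pairT) : bool :=
  [|| [exists k in x.1, exists k' in y.1, g k == g k'],
      [exists i : 'I_N, inchunk x.2 i && inchunk y.2 i] |
      [exists q : I, alpha q x && alpha q y]].

(* max_q beta^q, = 0 when J = 0 *)
Definition maxbeta (x : pairT) : R := \big[Num.max/0]_(q < J) beta q x.

Definition upd (p' : pairT -> R) (xs : pairT) : pairT -> R :=
  fun x => if narrow x && (0 < p' x) then
             (if conflict x xs then p' x - p' xs
              else p' x - 2 * p' xs * maxbeta x)
           else p' x.

(* one iteration (0-based index j) of the first loop; any maximizer may be chosen *)
Inductive step (j : nat) : (pairT -> R) -> seq pairT -> (pairT -> R) -> seq pairT -> Prop :=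
| step_skip (p' : pairT -> R) (S : seq pairT) :
    (forall x, narrow x -> Tail x.2 = j -> p' x <= 0) ->
    step j p' S p' S
| step_push (p' : pairT -> R) (S : seq pairT) (xs : pairT) :
    narrow xs -> Tail xs.2 = j ->
    (forall x, narrow x -> Tail x.2 = j -> p' x <= p' xs) ->
    0 < p' xs ->
    step j p' S (upd p' xs) (xs :: S).

(* states reachable after j iterations; the stack top is the head of the list *)
Inductive reach : nat -> (pairT -> R) -> seq pairT -> Prop :=
| reach0 : reach 0 p [::]
| reachS (j : nat) (p' p'' : pairT -> R) (S S'' : seq pairT) :
    reach j p' S -> step j p' S p'' S'' -> reach j.+1 p'' S''.

Definition popout (S : seq pairT) : {set pairT} :=
  foldl (fun F x => if feasible (x |: F) then x |: F else F) set0 S.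

Definition W_narrow (S : seq pairT) : R := \sum_(x in popout S) p x.

End Setup.

From HB Require Import structures.
From mathcomp Require Import all_boot all_order all_algebra.
From mathcomp Require Import lra.
Import Order.TTheory GRing.Theory Num.Theory.
Local Open Scope ring_scope.

(* Local-ratio analysis of Algorithm IIa, with C := T + 1 + Delta + 2J.

   Pushing a pair xs with residual profit hat_p = p'(xs) lowers the residual
   profit of any narrow feasible set F by at most C * hat_p: at most
   T + 1 + Delta members of F conflict with xs and have a tail >= Tail(xs)
   (one per user group of xs, one containing the index Tail(xs), one per
   alpha-constraint of xs), each losing hat_p; members with a smaller tail
   already have residual <= 0 and are untouched; the beta-terms total at most
   2 * hat_p * J because F respects every beta-budget.  Conversely the pop
   phase collects at least hat_p for every push: either xs is kept, or it is
   blocked by a conflicting kept pair (which lost hat_p) or by a beta-budget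
   violated despite beta(xs) <= 1/2 (so the kept pairs lost > hat_p).

   Both facts are packed into an invariant [lr_inv] of the first loop, with
   H the total of the pushed hat_p's. *)

Section LocalRatio.
Variables (R : realFieldType) (K N L T J Delta : nat) (g : 'I_K -> 'I_L) (I : finType)
  (p : pairT K N -> R) (beta : 'I_J -> pairT K N -> R) (alpha : I -> pairT K N -> bool).
Hypothesis beta_range : forall q x, inM K N L T g x -> 0 <= beta q x <= 1.
Hypothesis alpha_load : forall x, inM K N L T g x -> (\sum_(q : I) (alpha q x : nat) <= Delta)%N.

Local Notation pair := (pairT K N).
Local Notation nar := (narrow R K N L T J g beta).
Local Notation feas := (feasible R K N L J g I beta alpha).
Local Notation updf := (upd R K N L T J g I beta alpha).
Local Notation conf := (conflict K N L g I alpha).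
Local Notation mb := (maxbeta R K N J beta).
Local Notation tail x := (Tail N x.2).

Definition ratio_const : R := (T + 1 + Delta)%:R + 2 * J%:R.

Lemma ratio_const_gt0 : 0 < ratio_const.
Proof. by rewrite /ratio_const ltr_wpDr ?mulr_ge0 // ltr0n addn_gt0 addn1. Qed.

Lemma maxbeta_ge0 (x : pair) : 0 <= mb x.
Proof. by rewrite /maxbeta; elim/big_rec: _ => // i y _ hy; rewrite le_max hy orbT. Qed.

Lemma beta_le_maxbeta q (x : pair) : beta q x <= mb x.
Proof. by rewrite /maxbeta (bigD1 q) //= le_max lexx. Qed.

Lemma maxbeta_le_half (x : pair) : nar x -> mb x <= 1/2.
Proof.
move=> /andP[_ /forallP bx]; rewrite /maxbeta; elim/big_rec: _ => [|i y _ hy].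
  by rewrite mul1r invr_ge0 ler0n.
by rewrite ge_max hy bx.
Qed.

Lemma maxbeta_le_sum (x : pair) : inM K N L T g x -> mb x <= \sum_(q < J) beta q x.
Proof.
move=> hx; rewrite /maxbeta.
suff /andP[] : 0 <= \big[Num.max/0]_(q < J) beta q x <= \sum_(q < J) beta q x by [].
apply: (big_rec2 (fun a b => 0 <= a <= b)) => [|i a b _ /andP[a0 ab]]; first by rewrite lexx.
have /andP[bi0 _] := beta_range i x hx.
rewrite le_max a0 orbT ge_max lerDl (le_trans a0 ab) /=.
by rewrite (le_trans ab) // lerDr.
Qed.

Lemma conflict_group (y x : pair) (k k' : 'I_K) :
  k \in y.1 -> k' \in x.1 -> g k = g k' -> conf y x.
Proof.
move=> ky k'x e; apply/orP; left; apply/existsP; exists k; rewrite ky /=.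
by apply/existsP; exists k'; rewrite k'x e eqxx.
Qed.

Lemma conflict_index (y x : pair) (i : 'I_N) :
  inchunk N y.2 i -> inchunk N x.2 i -> conf y x.
Proof. by move=> iy ix; apply/or3P; apply: Or32; apply/existsP; exists i; rewrite iy. Qed.

Lemma conflict_alpha (y x : pair) (q : I) : alpha q y -> alpha q x -> conf y x.
Proof. by move=> ay ax; apply/or3P; apply: Or33; apply/existsP; exists q; rewrite ay. Qed.

Lemma conflict_self (x : pair) : inM K N L T g x -> conf x x.
Proof. by case/andP=> /and3P[/set0Pn[k kx] _ _] _; exact: (conflict_group x x k k kx kx erefl). Qed.

(* Two chunks with the same tail share that index. *)
Lemma conflict_same_tail (y x : pair) : nar y -> nar x -> tail y = tail x -> conf y x.
Proof.
move=> /andP[/andP[_ cy] _] /andP[/andP[_ cx] _] e.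
rewrite /is_chunk /Tail in cx cy e.
by apply: (conflict_index y x x.2.2); rewrite /inchunk ?cx -?e ?cy leqnn.
Qed.

Lemma narrow_inM (x : pair) : nar x -> inM K N L T g x.
Proof. by case/andP. Qed.

Lemma sum_bool_card (U : finType) (P : pred U) (F : {set U}) :
  (\sum_(y in F) (P y : nat) = #|[set y in F | P y]|)%N.
Proof.
rewrite -sum1_card [RHS](eq_bigl (fun y => (y \in F) && P y)) => [|y]; last by rewrite inE.
by rewrite big_mkcondr; apply: eq_bigr => y _; case: (P y).
Qed.

Lemma card_le1_setU1 (U : finType) (P : pred U) (x : U) (A : {set U}) :
  (#|[set z in A | P z]| <= 1)%N -> (P x -> forall y, y \in A -> ~~ P y) ->
  (#|[set z in x |: A | P z]| <= 1)%N.
Proof.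
move=> hA hx; case Px: (P x).
  rewrite -(cards1 x) subset_leq_card //; apply/subsetP => z.
  rewrite !inE => /andP[/orP[//|zA] Pz]; by rewrite (negbTE (hx Px z zA)) in Pz.
apply: leq_trans hA; apply: subset_leq_card; apply/subsetP => z.
rewrite !inE => /andP[/orP[/eqP->|zA] Pz]; first by rewrite Px in Pz.
by rewrite zA Pz.
Qed.

Lemma feasible_set0 : feas set0.
Proof.
apply/and4P; split; apply/forallP => q; rewrite ?big_set0 //;
  by rewrite (eq_card0 (A := [set _ in set0 | _])) // => y; rewrite !inE.
Qed.

Lemma feasible_setU1 (A : {set pair}) (x : pair) : feas A -> x \notin A ->
  (forall y, y \in A -> ~~ conf y x) ->
  (forall q, \sum_(y in x |: A) beta q y <= 1) -> feas (x |: A).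
Proof.
move=> /and4P[hG hI hB hA] xA nc hb; apply/and4P; split.
- apply/forallP => s; apply: card_le1_setU1; first exact: (forallP hG s).
  move=> /existsP[k' /andP[k'x e']] y yA; apply: contra (nc y yA) => /existsP[k /andP[ky e]].
  by apply: (conflict_group y x k k' ky k'x); rewrite (eqP e) (eqP e').
- apply/forallP => i; apply: card_le1_setU1; first exact: (forallP hI i).
  by move=> ix y yA; apply: contra (nc y yA) => iy; exact: conflict_index iy ix.
- exact/forallP.
- apply/forallP => q; rewrite big_setU1 //=; case ax: (alpha q x); last exact: (forallP hA q).
  rewrite big1 // => y yA; apply/eqP; rewrite eqb0; apply: contra (nc y yA) => ay.
  exact: conflict_alpha ay ax.
Qed.

(* A feasible narrow set F has at most T + 1 + Delta members that conflict
   with a narrow xs and end no earlier than xs: such a member shares a group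
   with a user of xs (at most |U| <= T members), contains the index Tail(xs)
   (at most one member), or shares an alpha-constraint (at most Delta). *)
Lemma late_conflicts_le (F : {set pair}) xs : nar xs -> feas F ->
  (\sum_(y in F) (conf y xs && (tail xs <= tail y)%N : nat) <= T + 1 + Delta)%N.
Proof.
move=> nx /and4P[hG hI _ hA]; have /andP[/andP[/and3P[_ hT _] _] _] := nx.
apply: leq_trans (_ : \sum_(y in F) (\sum_(k in xs.1) ([exists k0 in y.1, g k0 == g k] : nat)
   + (inchunk N y.2 xs.2.2 : nat) + \sum_(q : I) (alpha q xs && alpha q y : nat)) <= _)%N.
  apply: leq_sum => y _; case: andP => //= -[+ tl]; case/or3P.
  - move=> /existsP[k /andP[ky /existsP[k' /andP[k'x e]]]].
    have hk' : [exists k0 in y.1, g k0 == g k'] by apply/existsP; exists k; rewrite ky.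
    by rewrite !addn_gt0 (bigD1 k') //= hk'.
  - move=> /existsP[i /andP[/andP[yi _] /andP[_ ix]]].
    by rewrite /inchunk (leq_trans yi ix) tl !addn_gt0 orbT.
  - by move=> /existsP[q /andP[ay ax]]; rewrite !addn_gt0 (bigD1 q) //= ax ay orbT.
rewrite !big_split /=; apply: leq_add; first apply: leq_add.
- rewrite exchange_big /= -[T]/(T%N); apply: leq_trans hT; rewrite -sum1_card.
  by apply: leq_sum => k _; rewrite sum_bool_card; exact: (forallP hG (g k)).
- by rewrite sum_bool_card; exact: (forallP hI xs.2.2).
- rewrite exchange_big /=; apply: leq_trans (alpha_load xs (narrow_inM xs nx)).
  apply: leq_sum => q _; case: (alpha q xs); last by rewrite big1.
  exact: (forallP hA q).
Qed.

Lemma upd_le (p' : pair -> R) xs y : 0 <= p' xs -> updf p' xs y <= p' y.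
Proof.
move=> h; rewrite /upd; case: ifP => // _; case: ifP => _; first by rewrite gerBl.
by rewrite gerBl !mulr_ge0 // maxbeta_ge0.
Qed.

Lemma upd_loss_conflict (p' : pair -> R) xs y : nar y -> 0 < p' y -> conf y xs ->
  p' y - updf p' xs y = p' xs.
Proof. by move=> ny py cy; rewrite /upd ny py cy /=; lra. Qed.

Lemma upd_loss_beta (p' : pair -> R) xs y q : nar y -> 0 < p' y -> 0 <= p' xs ->
  2 * p' xs * beta q y <= p' y - updf p' xs y.
Proof.
move=> ny py h; have := beta_le_maxbeta q y; have := maxbeta_le_half y ny.
by rewrite /upd ny py /=; case: ifP => _; nra.
Qed.

Lemma upd_loss_le (p' : pair -> R) xs y : 0 <= p' xs ->
  (0 < p' y -> (tail xs <= tail y)%N) ->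
  p' y - updf p' xs y <= p' xs * ((conf y xs && (tail xs <= tail y)%N : nat)%:R + 2 * mb y).
Proof.
move=> h ht; have := maxbeta_ge0 y; rewrite /upd; case: ifP => [/andP[_ py]|_].
  by rewrite (ht py); case: ifP => _ /=; nra.
by rewrite subrr => hm; rewrite mulr_ge0 // addr_ge0 //; nra.
Qed.

Lemma upd_total_loss_le (p' : pair -> R) xs (F : {set pair}) : 0 <= p' xs -> nar xs ->
  (forall y, y \in F -> nar y) -> feas F ->
  (forall y, nar y -> (tail y < tail xs)%N -> p' y <= 0) ->
  \sum_(y in F) (p' y - updf p' xs y) <= ratio_const * p' xs.
Proof.
move=> h nx nF fF early.
apply: le_trans (_ : \sum_(y in F)
  p' xs * ((conf y xs && (tail xs <= tail y)%N : nat)%:R + 2 * mb y) <= _).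
  apply: ler_sum => y yF; apply: upd_loss_le => // py.
  by rewrite leqNgt; apply: contraTN py => /(early y (nF y yF)); rewrite -leNgt.
rewrite -mulr_sumr [ratio_const * _]mulrC; apply: ler_wpM2l => //.
rewrite big_split /= -natr_sum; apply: lerD; first by rewrite ler_nat late_conflicts_le.
rewrite -mulr_sumr; apply: ler_wpM2l => //.
apply: le_trans (_ : \sum_(y in F) \sum_(q < J) beta q y <= _).
  by apply: ler_sum => y yF; apply/maxbeta_le_sum/narrow_inM/nF.
rewrite exchange_big /= -[J in J%:R]card_ord -sumr_const.
by case/and4P: fF => _ _ /forallP hB _; apply: ler_sum => q _; exact: hB.
Qed.

Local Notation reachR := (reach R K N L T J g I p beta alpha).

Definition popfrom (A : {set pair}) (S : seq pair) : {set pair} :=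
  foldl (fun F x => if feas (x |: F) then x |: F else F) A S.

(* Local-ratio invariant after j iterations, with residual q, stack S and
   H the accumulated hat_p's: (i) every narrow feasible set is worth at most
   its residual plus C * H; (ii) popping S on top of a narrow feasible set A
   of positive residual gains at least H over the residual of A; (iii) narrow
   pairs with tail < j have nonpositive residual. *)
Definition lr_inv (j : nat) (q : pair -> R) (S : seq pair) (H : R) : Prop :=
  [/\ 0 <= H,
   forall F : {set pair}, (forall y, y \in F -> nar y) -> feas F ->
     \sum_(y in F) p y <= \sum_(y in F) q y + ratio_const * H,
   forall A : {set pair}, (forall y, y \in A -> nar y) -> feas A ->
     (forall y, y \in A -> 0 < q y) ->
     \sum_(y in A) q y + H <= \sum_(y in popfrom A S) p y &
   forall y, nar y -> (tail y < j)%N -> q y <= 0].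

Lemma lr_inv_init : lr_inv 0 p [::] 0.
Proof. by split=> // [F _ _|A _ _ _]; rewrite ?mulr0 addr0. Qed.

Lemma lr_inv_skip j (p' : pair -> R) S H :
  (forall x, nar x -> tail x = j -> p' x <= 0) -> lr_inv j p' S H -> lr_inv j.+1 p' S H.
Proof.
move=> skip [H0 up lo early]; split => // y ny.
by rewrite ltnS leq_eqVlt => /orP[/eqP|]; [exact: skip | exact: early].
Qed.

Section Push.
Variables (j : nat) (p' : pair -> R) (S : seq pair) (H : R) (xs : pair).
Hypotheses (nx : nar xs) (tx : tail xs = j) (px : 0 < p' xs).
Hypothesis xs_max : forall x, nar x -> tail x = j -> p' x <= p' xs.
Hypothesis inv : lr_inv j p' S H.

Let px0 : 0 <= p' xs := ltW px.

Let split_residual (F : {set pair}) :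
  \sum_(y in F) p' y = \sum_(y in F) updf p' xs y + \sum_(y in F) (p' y - updf p' xs y).
Proof. by rewrite -big_split /=; apply: eq_bigr => y _; rewrite addrC subrK. Qed.

(* Part (i) after the push: the loss is at most C * hat_p. *)
Lemma lr_push_upper (F : {set pair}) : (forall y, y \in F -> nar y) -> feas F ->
  \sum_(y in F) p y <= \sum_(y in F) updf p' xs y + ratio_const * (H + p' xs).
Proof.
case: inv => _ up _ early nF fF; rewrite -tx in early.
have loss := upd_total_loss_le p' xs F px0 nx nF fF early.
by have := up F nF fF; rewrite split_residual mulrDr; lra.
Qed.

(* If xs is rejected when popped on top of A, the pairs of A lost at least
   hat_p in total: through a conflict with xs, or through a beta-budget that
   xs (with beta <= 1/2) would overflow. *)
Lemma rejected_loss (A : {set pair}) : (forall y, y \in A -> nar y) -> feas A ->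
  (forall y, y \in A -> 0 < p' y) -> xs \notin A -> ~~ feas (xs |: A) ->
  p' xs <= \sum_(y in A) (p' y - updf p' xs y).
Proof.
move=> nA fA pA xsA nf; have loss_ge0 y : 0 <= p' y - updf p' xs y.
  by rewrite subr_ge0 upd_le.
have [/existsP[y /andP[yA cy]]|nc] := boolP [exists y in A, conf y xs].
  rewrite (bigD1 y) //= (upd_loss_conflict p' xs y (nA y yA) (pA y yA) cy) lerDl.
  exact: sumr_ge0.
have [/forallP fits|/forallPn[q over]] := boolP [forall q, \sum_(y in xs |: A) beta q y <= 1].
  suff : feas (xs |: A) by rewrite (negbTE nf).
  apply: feasible_setU1 => // y yA; apply: contra nc => cy.
  by apply/existsP; exists y; rewrite yA.
rewrite -ltNge big_setU1 //= in over.
have bx : beta q xs <= 1/2 by case/andP: nx => _ /forallP.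
apply: le_trans (_ : \sum_(y in A) 2 * p' xs * beta q y <= _); last first.
  by apply: ler_sum => y yA; apply: upd_loss_beta; [apply: nA | apply: pA |].
rewrite -mulr_sumr; move: over bx px; set s := \sum_(y in A) _; nra.
Qed.

(* Part (ii) after the push: if xs is kept it contributes its full residual;
   otherwise the loss of A pays for it. *)
Lemma lr_push_lower (A : {set pair}) : (forall y, y \in A -> nar y) -> feas A ->
  (forall y, y \in A -> 0 < updf p' xs y) ->
  \sum_(y in A) updf p' xs y + (H + p' xs) <= \sum_(y in popfrom A (xs :: S)) p y.
Proof.
case: inv => _ _ lo _ nA fA pA.
have upd_xs : updf p' xs xs = 0.
  by have := upd_loss_conflict p' xs xs nx px (conflict_self xs (narrow_inM xs nx)); lra.
have xsA : xs \notin A by apply/negP => /pA; rewrite upd_xs ltxx.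
have pA' y : y \in A -> 0 < p' y by move=> /pA h; exact: lt_le_trans h (upd_le _ _ _ px0).
rewrite /popfrom /= -/(popfrom _ S); case: ifP => hf.
  apply: le_trans (lo _ _ hf _).
  - rewrite big_setU1 //=; have : \sum_(y in A) updf p' xs y <= \sum_(y in A) p' y.
      by apply: ler_sum => y _; exact: upd_le.
    lra.
  - by move=> y; rewrite !inE => /orP[/eqP->|/nA].
  - by move=> y; rewrite !inE => /orP[/eqP->|/pA'].
apply: le_trans (lo _ nA fA pA'); rewrite split_residual.
by have := rejected_loss A nA fA pA' xsA (negbT hf); lra.
Qed.

(* Part (iii) after the push: narrow pairs with tail j conflict with xs and
   have residual at most hat_p, so they drop to <= 0. *)
Lemma lr_push_tail y : nar y -> (tail y < j.+1)%N -> updf p' xs y <= 0.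
Proof.
case: inv => _ _ _ early ny; rewrite ltnS leq_eqVlt => /orP[/eqP e|lt].
  rewrite /upd ny /=; case: ifP => [py|/negbT]; last by rewrite -leNgt.
  rewrite (conflict_same_tail y xs ny nx (etrans e (esym tx))).
  by have := xs_max y ny e; lra.
by have := early y ny lt; rewrite /upd ny /=; case: ifP => [py|_]; lra.
Qed.

Lemma lr_inv_push : lr_inv j.+1 (updf p' xs) (xs :: S) (H + p' xs).
Proof.
case: (inv) => H0 _ _ _; split.
- exact: addr_ge0.
- exact: lr_push_upper.
- exact: lr_push_lower.
- exact: lr_push_tail.
Qed.

End Push.

Lemma reach_lr_inv j (q : pair -> R) S : reachR j q S -> exists H, lr_inv j q S H.
Proof.
elim=> [|i q0 q1 S0 S1 _ [H inv] step]; first by exists 0; exact: lr_inv_init.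
case: step inv => [{}q0 {}S0 skip inv | {}q0 {}S0 xs nx tx xs_max px inv].
- by exists H; exact: lr_inv_skip.
- by exists (H + q0 xs); exact: lr_inv_push.
Qed.

(* At the end of the loop all narrow residuals are nonpositive, so the
   optimum is at most C * H, while popping from the empty set yields >= H. *)
Lemma final_opt_le (q : pair -> R) S H : lr_inv N q S H ->
  Wopt_narrow R K N L T J g I p beta alpha <= ratio_const * H.
Proof.
case=> H0 up _ early; rewrite /Wopt_narrow.
elim/big_rec: _ => [|F m /andP[sub fF] hm]; first by rewrite mulr_ge0 // ltW ?ratio_const_gt0.
rewrite ge_max hm andbT.
have nF y : y \in F -> nar y by move/(subsetP sub); rewrite inE.
apply: le_trans (up F nF fF) _; rewrite gerDr sumr_le0 // => y yF.
exact: early (nF y yF) (ltn_ord _).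
Qed.

Lemma final_H_le_W (q : pair -> R) S H : lr_inv N q S H ->
  H <= W_narrow R K N L J g I p beta alpha S.
Proof.
case=> _ _ lo _; have := lo set0; rewrite big_set0 add0r; apply => //.
- by move=> y; rewrite inE.
- exact: feasible_set0.
- by move=> y; rewrite inE.
Qed.

End LocalRatio.

Arguments ratio_const_gt0 {R T J Delta}.
Arguments reach_lr_inv {R K N L T J Delta g I p beta alpha} beta_range alpha_load {j q S}.
Arguments final_opt_le {R K N L T J Delta g I p beta alpha q S H}.
Arguments final_H_le_W {R K N L T J Delta g I p beta alpha q S H}.

Theorem propositionI (R : realFieldType) (K N L T J Delta : nat)
  (g : 'I_K -> 'I_L) (I : finType)
  (p : pairT K N -> R) (beta : 'I_J -> pairT K N -> R) (alpha : I -> pairT K N -> bool) :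
  (0 < K)%N -> (0 < N)%N -> (0 < T)%N ->
  (forall s : 'I_L, exists k, g k = s) ->
  (forall x, inM K N L T g x -> 0 <= p x) ->
  (forall q x, inM K N L T g x -> 0 <= beta q x <= 1) ->
  (forall x, inM K N L T g x -> (\sum_(q : I) (alpha q x : nat) <= Delta)%N) ->
  forall (p' : pairT K N -> R) (S : seq (pairT K N)),
    reach R K N L T J g I p beta alpha N p' S ->
    Wopt_narrow R K N L T J g I p beta alpha / (1 + T%:R + Delta%:R + 2 * J%:R)
      <= W_narrow R K N L J g I p beta alpha S.
Proof.
move=> _ _ _ _ _ beta_range alpha_load p' S reached.
have [H inv] := reach_lr_inv beta_range alpha_load reached.
have -> : 1 + T%:R + Delta%:R + 2 * J%:R = ratio_const R T J Delta.
  by rewrite /ratio_const !natrD; lra.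
rewrite ler_pdivrMr ?ratio_const_gt0 // mulrC.
apply: le_trans (final_opt_le inv) _.
by rewrite ler_wpM2l ?(ltW ratio_const_gt0) ?(final_H_le_W inv).
Qed.
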